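(* Under the setting of the context, if (TS1) holds and $u$ is the solution of problem (P), then $$\int_0^\infty u(x,t)\,\Delta t=\int_0^\infty u(0,t)\,\Delta t=\frac{A\mu_x}{k}\quad\text{for all }x\in\mu_x\mathbb{N}_0.$$
   Context: A time scale $\mathbb{T}$ is a nonempty closed subset of $\mathbb{R}$; here $\min\mathbb{T}=0$ and $\sup\mathbb{T}=+\infty$. $\sigma(t)=\inf\{s\in\mathbb{T}:s>t\}$ is the forward jump and $\mu_t(t)=\sigma(t)-t$ the graininess; $u^{\Delta_t}$ denotes the (Hilger) delta derivative in $t$ and $\int\cdot\,\Delta t$ the delta integral, with $\int_0^\infty=\lim_{T\to\infty}\int_0^T$. Fix $A>0$, $k>0$, $\mu_x>0$, $\Omega=\mu_x\mathbb{Z}\times\mathbb{T}$, $\mu_x\mathbb{N}_0=\{0,\mu_x,2\mu_x,\dots\}$. Problem (P): $u^{\Delta_t}(x,t)+k\frac{u(x,t)-u(x-\mu_x,t)}{\mu_x}=0$ for $(x,t)\in\Omega$, $u(0,0)=A$, $u(x,0)=0$ for $x\ne0$. A solution is $u:\Omega\to\mathbb{R}$ with each $u(x,\cdot)$ delta differentiable on $\mathbb{T}$, satisfying (P), and bounded on $\mu_x\mathbb{Z}\times(\mathbb{T}\cap[0,T_0])$ for every $T_0>0$. Condition (TS1): $1-\frac{k\mu_t(t)}{\mu_x}>0$ for all $t\in\mathbb{T}$. *)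

From Stdlib Require Import Reals ClassicalEpsilon.
Open Scope R_scope.

Definition is_time_scale (T : R -> Prop) : Prop :=
  (* closed subset of R *)
  (forall x, (forall eps, 0 < eps -> exists y, T y /\ Rabs (y - x) < eps) -> T x)
  /\ T 0 /\ (forall t, T t -> 0 <= t)
  /\ (forall M, exists t, T t /\ M < t).

Definition is_inf (E : R -> Prop) (s : R) : Prop :=
  (forall r, E r -> s <= r) /\ (forall m, (forall r, E r -> m <= r) -> m <= s).

(* forward jump sigma(t) = inf {s in T | s > t} (well defined since T is unbounded above) *)
Definition sigma (T : R -> Prop) (t : R) : R :=
  epsilon (inhabits 0) (fun s => is_inf (fun r => T r /\ t < r) s).

Definition graininess (T : R -> Prop) (t : R) : R := sigma T t - t.

Definition delta_deriv (T : R -> Prop) (f : R -> R) (t D : R) : Prop :=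
  forall eps, 0 < eps -> exists delta, 0 < delta /\
    forall s, T s -> Rabs (t - s) < delta ->
      Rabs (f (sigma T t) - f s - D * (sigma T t - s)) <= eps * Rabs (sigma T t - s).

(* Improper delta integral  int_0^infty f(t) Delta t = I, with
   int_0^b f Delta t := F(b) - F(0) for a delta antiderivative F of f on T,
   and the limit b -> infinity taken along T. *)
Definition delta_integral_0_infty (T : R -> Prop) (f : R -> R) (I : R) : Prop :=
  exists F : R -> R,
    (forall t, T t -> delta_deriv T F t (f t)) /\
    (forall eps, 0 < eps -> exists M, forall b, T b -> M < b ->
        Rabs (F b - F 0 - I) < eps).

Definition in_grid (mux x : R) : Prop := exists n : Z, x = IZR n * mux.

Definition is_solution_P (T : R -> Prop) (A k mux : R) (u : R -> R -> R) : Prop :=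
  (forall x t, in_grid mux x -> T t ->
     delta_deriv T (u x) t (- (k * ((u x t - u (x - mux) t) / mux))))
  /\ u 0 0 = A
  /\ (forall x, in_grid mux x -> x <> 0 -> u x 0 = 0)
  /\ (forall T0, 0 < T0 -> exists M, forall x t, in_grid mux x -> T t -> t <= T0 ->
        Rabs (u x t) <= M).

Definition TS1 (T : R -> Prop) (k mux : R) : Prop :=
  forall t, T t -> 1 - k * graininess T t / mux > 0.

(* Write u_z := u(z mux, .) for the grid columns and c := k / mux, so that
   problem (P) reads  u_z^Delta = - c (u_z - u_(z-1)),  and (TS1) says
   c mu_t(t) < 1 on T.

   1. Time-scale calculus: sigma(t) is the successor point of T, and an
      induction principle on T (base, jump, right-dense and left-dense steps);
      a delta derivative determines the jump f(sigma t) = f t + mu f^Delta(t)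
      and forces continuity.
   2. A comparison principle: a nondecreasing bound B which holds at t0, is
      preserved across jumps and grows faster than f at right-dense contact
      points dominates f on [t0, oo).  It is stated for families in which all
      but finitely many members are bounded a priori.
   3. Consequences: relaxation  f^Delta = - c (f - g)  sends f to 0 when g
      tends to 0; and a bounded family with v_j^Delta = - c (v_j - v_(j+1)) and
      v_j(0) = 0 vanishes (it is dominated by eps 2^j e^(2ct) for every eps).
   4. Problem (P): the columns z < 0 vanish by 3, hence the columns n >= 0 tend
      to 0 by induction; the partial mass S_n = u_0 + ... + u_n satisfies
      S_n^Delta = - c u_n and S_n(0) = A, so - S_n / c is an antiderivative of
      u_n whose increment on [0, oo) is A / c = A mux / k. *)

From Pilot Require Import Defs.
From Stdlib Require Import Reals Lra Lia List Classical ClassicalEpsilon.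
Open Scope R_scope.

(* Reals also exports a [sigma]; the forward jump is the one of Defs. *)
Local Notation sigma := Defs.sigma.

Lemma le_of_le_plus_mult a b c :
  0 <= c -> (forall eta, 0 < eta -> a <= b + eta * c) -> a <= b.
Proof.
  intros Hc H. apply Rle_plus_epsilon. intros e He.
  assert (Hq : 0 < e / (c + 1)) by (apply Rdiv_lt_0_compat; lra).
  assert (e / (c + 1) * c <= e).
  { apply (Rmult_le_reg_r (c + 1)); [lra|].
    replace (e / (c + 1) * c * (c + 1)) with (e * c) by (field; lra). nra. }
  specialize (H _ Hq). lra.
Qed.

Lemma Rabs_le_inv a b : Rabs a <= b -> - b <= a <= b.
Proof.
  intros H. pose proof (Rle_abs a). pose proof (Rle_abs (- a)).
  rewrite Rabs_Ropp in *. lra.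
Qed.

Lemma exp_tangent_le x y : x <= y -> exp x * (1 + (y - x)) <= exp y.
Proof.
  intros Hxy. replace y with (x + (y - x)) at 2 by ring. rewrite exp_plus.
  apply Rmult_le_compat_l; [apply Rlt_le, exp_pos | apply exp_ineq1_le].
Qed.

Lemma exp_monotone x y : x <= y -> exp x <= exp y.
Proof.
  intros Hxy. pose proof (exp_tangent_le x y Hxy). pose proof (exp_pos x). nra.
Qed.

(* The weight eps 2^i e^(2cs) dominating the i-th member of a bounded family:
   it is positive, doubles with i and grows at least along its tangent. *)
Definition weight (eps c : R) (i : nat) (s : R) : R := eps * (2 ^ i * exp (2 * c * s)).

Lemma weight_pos eps c : 0 < eps -> forall i s, 0 < weight eps c i s.
Proof.
  intros He i s. unfold weight. apply Rmult_lt_0_compat; [lra|].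
  apply Rmult_lt_0_compat; [apply pow_lt; lra | apply exp_pos].
Qed.

Lemma weight_succ eps c : forall i s, weight eps c (S i) s = 2 * weight eps c i s.
Proof. intros i s. unfold weight. simpl. ring. Qed.

Lemma weight_tangent eps c : 0 < eps -> 0 <= c -> forall i s s', s <= s' ->
  weight eps c i s * (1 + 2 * c * (s' - s)) <= weight eps c i s'.
Proof.
  intros He Hc i s s' Hss. unfold weight.
  pose proof (exp_tangent_le (2 * c * s) (2 * c * s') ltac:(nra)).
  assert (0 < eps * 2 ^ i) by (apply Rmult_lt_0_compat; [lra | apply pow_lt; lra]).
  replace (2 * c * s' - 2 * c * s) with (2 * c * (s' - s)) in * by ring. nra.
Qed.

Lemma inf_exists (E : R -> Prop) (m r0 : R) :
  E r0 -> (forall r, E r -> m <= r) -> exists s, is_inf E s.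
Proof.
  intros H0 Hb.
  destruct (completeness (fun x => E (- x))) as [l [Hl1 Hl2]].
  - exists (- m). intros x Hx. specialize (Hb _ Hx). lra.
  - exists (- r0). rewrite Ropp_involutive. exact H0.
  - exists (- l). split.
    + intros r Hr. assert (- r <= l) by (apply Hl1; rewrite Ropp_involutive; exact Hr). lra.
    + intros m' Hm'. assert (l <= - m') by (apply Hl2; intros x Hx; specialize (Hm' _ Hx); lra).
      lra.
Qed.

Lemma inf_approx (E : R -> Prop) s :
  is_inf E s -> forall eps, 0 < eps -> exists r, E r /\ r < s + eps.
Proof.
  intros [_ Hglb] eps Heps. apply NNPP. intro Hn.
  assert (s + eps <= s); [|lra].
  apply Hglb. intros r Hr. apply Rnot_lt_le. intro. apply Hn. eauto.
Qed.

Definition tends_to_zero (T : R -> Prop) (g : R -> R) : Prop :=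
  forall eps, 0 < eps -> exists M, forall b, T b -> M < b -> Rabs (g b) < eps.

Lemma tends_to_zero_plus T f g :
  tends_to_zero T f -> tends_to_zero T g -> tends_to_zero T (fun b => f b + g b).
Proof.
  intros Hf Hg eps He.
  destruct (Hf (eps / 2)) as [M1 H1]; [lra|]. destruct (Hg (eps / 2)) as [M2 H2]; [lra|].
  exists (Rmax M1 M2). intros b Hb Hlt.
  pose proof (Rmax_l M1 M2). pose proof (Rmax_r M1 M2).
  specialize (H1 b Hb ltac:(lra)). specialize (H2 b Hb ltac:(lra)).
  eapply Rle_lt_trans; [apply Rabs_triang | lra].
Qed.

Lemma tends_to_zero_sum T (f : nat -> R -> R) :
  (forall j, tends_to_zero T (f j)) ->
  forall n, tends_to_zero T (fun b => sum_f_R0 (fun j => f j b) n).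
Proof.
  intros Hf n. induction n as [|n IH]; [apply Hf|].
  exact (tends_to_zero_plus T _ _ IH (Hf (S n))).
Qed.

Lemma delta_deriv_ext T f g t D D' :
  (forall x, f x = g x) -> D = D' -> delta_deriv T f t D -> delta_deriv T g t D'.
Proof.
  intros Hf <- H eps He. destruct (H eps He) as [d [Hd Hs]].
  exists d. split; [exact Hd|]. intros s Hs' Hts. rewrite <- !Hf. auto.
Qed.

Lemma delta_deriv_plus T f g t D1 D2 :
  delta_deriv T f t D1 -> delta_deriv T g t D2 ->
  delta_deriv T (fun x => f x + g x) t (D1 + D2).
Proof.
  intros H1 H2 eps He.
  destruct (H1 (eps / 2)) as [d1 [Hd1 Hs1]]; [lra|].
  destruct (H2 (eps / 2)) as [d2 [Hd2 Hs2]]; [lra|].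
  exists (Rmin d1 d2). split; [apply Rmin_glb_lt; auto|].
  intros s Hs Hts.
  specialize (Hs1 s Hs (Rlt_le_trans _ _ _ Hts (Rmin_l _ _))).
  specialize (Hs2 s Hs (Rlt_le_trans _ _ _ Hts (Rmin_r _ _))).
  replace (f (sigma T t) + g (sigma T t) - (f s + g s) - (D1 + D2) * (sigma T t - s))
    with ((f (sigma T t) - f s - D1 * (sigma T t - s))
          + (g (sigma T t) - g s - D2 * (sigma T t - s))) by ring.
  eapply Rle_trans; [apply Rabs_triang | lra].
Qed.

Lemma delta_deriv_scal T f t D a :
  delta_deriv T f t D -> delta_deriv T (fun x => a * f x) t (a * D).
Proof.
  intros H eps He.
  assert (Ha : 0 < Rabs a + 1) by (pose proof (Rabs_pos a); lra).
  destruct (H (eps / (Rabs a + 1))) as [d [Hd Hs]]; [apply Rdiv_lt_0_compat; lra|].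
  exists d. split; [exact Hd|]. intros s Hs' Hts. specialize (Hs s Hs' Hts).
  set (err := f (sigma T t) - f s - D * (sigma T t - s)) in Hs.
  replace (a * f (sigma T t) - a * f s - a * D * (sigma T t - s)) with (a * err)
    by (unfold err; ring).
  rewrite Rabs_mult.
  pose proof (Rabs_pos a). pose proof (Rabs_pos (sigma T t - s)). pose proof (Rabs_pos err).
  assert (Hb : Rabs a * Rabs err <= (Rabs a + 1) * (eps / (Rabs a + 1) * Rabs (sigma T t - s)))
    by nra.
  replace ((Rabs a + 1) * (eps / (Rabs a + 1) * Rabs (sigma T t - s)))
    with (eps * Rabs (sigma T t - s)) in Hb by (field; lra).
  exact Hb.
Qed.

Lemma delta_deriv_id T t : delta_deriv T (fun x => x) t 1.
Proof.
  intros eps He. exists 1. split; [lra|]. intros s _ _.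
  replace (sigma T t - s - 1 * (sigma T t - s)) with 0 by ring. rewrite Rabs_R0.
  pose proof (Rabs_pos (sigma T t - s)). nra.
Qed.

Section TimeScale.

Variable T : R -> Prop.
Hypothesis HT : is_time_scale T.

Lemma ts_zero : T 0.
Proof. destruct HT as (_ & H & _). exact H. Qed.

Lemma ts_nonneg t : T t -> 0 <= t.
Proof. destruct HT as (_ & _ & H & _). apply H. Qed.

Lemma ts_unbounded M : exists t, T t /\ M < t.
Proof. destruct HT as (_ & _ & _ & H). apply H. Qed.

Lemma inf_mem (E : R -> Prop) s : (forall r, E r -> T r) -> is_inf E s -> T s.
Proof.
  intros HE Hs. destruct HT as [Hclosed _]. apply Hclosed. intros eps He.
  destruct (inf_approx E s Hs eps He) as [r [Hr Hrs]].
  pose proof (proj1 Hs r Hr). exists r. split; [auto|]. rewrite Rabs_right; lra.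
Qed.

Lemma sigma_is_inf t : is_inf (fun r => T r /\ t < r) (sigma T t).
Proof.
  unfold sigma. apply epsilon_spec.
  destruct (ts_unbounded t) as [r [Hr Hlt]].
  apply (inf_exists _ t r); [now split | intros x [_ Hx]; lra].
Qed.

Lemma sigma_ge t : t <= sigma T t.
Proof. apply (proj2 (sigma_is_inf t)). intros r [_ Hr]. lra. Qed.

Lemma sigma_le t r : T r -> t < r -> sigma T t <= r.
Proof. intros Hr Hlt. apply (proj1 (sigma_is_inf t)). now split. Qed.

Lemma sigma_eq p tau :
  T tau -> p < tau -> (forall r, T r -> p < r -> tau <= r) -> sigma T p = tau.
Proof.
  intros Htau Hp Hr. pose proof (sigma_le p tau Htau Hp).
  assert (tau <= sigma T p) by (apply (proj2 (sigma_is_inf p)); intros r [h1 h2]; auto).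
  lra.
Qed.

(* A left-scattered point tau > t0 of T is the forward jump of its
   predecessor p = sup (T /\ [t0, tau)). *)
Lemma left_scattered_predecessor t0 tau eps :
  T t0 -> T tau -> t0 < tau -> 0 < eps ->
  (forall s, T s -> s < tau -> s <= tau - eps) ->
  exists p, T p /\ t0 <= p /\ p < tau /\ sigma T p = tau.
Proof.
  intros Ht0 Htau Hlt Heps Hgap.
  set (G := fun s => T s /\ t0 <= s /\ s < tau).
  destruct (completeness G) as [p [Hub Hlub]].
  - exists tau. intros x (_ & _ & h). lra.
  - exists t0. repeat split; auto; lra.
  - assert (Hpt0 : t0 <= p) by (apply Hub; repeat split; auto; lra).
    assert (Hptau : p <= tau - eps) by (apply Hlub; intros x (h1 & _ & h3); auto).
    assert (HTp : T p).
    { destruct HT as [Hclosed _]. apply Hclosed. intros eta He. apply NNPP. intro Hfar.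
      assert (p <= p - eta); [|lra].
      apply Hlub. intros x Hx. apply Rnot_lt_le. intro Hnear. apply Hfar.
      pose proof (Hub x Hx). exists x. split; [apply Hx|]. rewrite Rabs_left1; lra. }
    exists p. repeat split; auto; [lra|].
    apply sigma_eq; auto; [lra|]. intros r Hr Hpr. apply Rnot_lt_le. intro Hrtau.
    assert (r <= p) by (apply Hub; repeat split; auto; lra). lra.
Qed.

(* Induction principle on T: a property holding at t0, passing across jumps,
   holding right after right-dense points and at left-dense limits holds on
   T /\ [t0, oo).  The proof considers the least counterexample tau. *)
Lemma ts_ind (S : R -> Prop) (t0 : R) :
  T t0 -> S t0 ->
  (forall t, T t -> t0 <= t -> t < sigma T t -> S t -> S (sigma T t)) ->
  (forall t, T t -> t0 <= t -> sigma T t = t -> S t ->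
     exists d, 0 < d /\ forall s, T s -> t < s -> s < t + d -> S s) ->
  (forall t, T t -> t0 < t -> (forall s, T s -> t0 <= s -> s < t -> S s) ->
     (forall eps, 0 < eps -> exists s, T s /\ t - eps < s /\ s < t) -> S t) ->
  forall t, T t -> t0 <= t -> S t.
Proof.
  intros Ht0 Hbase Hjump Hdense Hleft t1 Ht1 Hle1. apply NNPP. intro Hfail.
  set (E := fun s => T s /\ t0 <= s /\ ~ S s).
  destruct (inf_exists E t0 t1) as [tau Htau]; [now split | intros r (_ & h & _); exact h |].
  pose proof Htau as [Hlb Hglb].
  assert (Hge : t0 <= tau) by (apply Hglb; intros r (_ & h & _); exact h).
  assert (HTtau : T tau) by (apply (inf_mem E); [intros r []; auto | exact Htau]).
  assert (Hbefore : forall s, T s -> t0 <= s -> s < tau -> S s).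
  { intros s Hs h1 h2. apply NNPP. intro. assert (tau <= s) by (apply Hlb; now split). lra. }
  assert (Stau : S tau).
  { destruct (Req_dec tau t0) as [->|Hne]; [exact Hbase|].
    destruct (classic (forall eps, 0 < eps -> exists s, T s /\ tau - eps < s /\ s < tau))
      as [Hld|Hls].
    - apply Hleft; auto; lra.
    - apply not_all_ex_not in Hls as [eps Heps]. apply imply_to_and in Heps as [Heps Hno].
      destruct (left_scattered_predecessor t0 tau eps) as (p & Hp & Hp0 & Hptau & Hsig);
        auto; [lra| |].
      + intros s Hs Hst. apply Rnot_lt_le. intro. apply Hno. exists s. repeat split; auto; lra.
      + rewrite <- Hsig. apply Hjump; [exact Hp | exact Hp0 | lra | apply Hbefore; auto]. }
  (* so every counterexample lies strictly beyond tau, yet arbitrarily close to it *)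
  assert (Hafter : forall s, E s -> tau < s).
  { intros s Hs. pose proof (Hlb s Hs). destruct (Req_dec s tau) as [->|]; [|lra].
    destruct Hs as (_ & _ & Hn). contradiction. }
  destruct (Rle_lt_or_eq_dec _ _ (sigma_ge tau)) as [Hrs|Hrd].
  - destruct (inf_approx E tau Htau (sigma T tau - tau)) as [e [He Hes]]; [lra|].
    pose proof (Hafter e He). destruct He as (HTe & _).
    pose proof (sigma_le tau e HTe ltac:(lra)). lra.
  - destruct (Hdense tau HTtau Hge (eq_sym Hrd) Stau) as [d [Hd Hds]].
    destruct (inf_approx E tau Htau d Hd) as [e [He Hed]].
    pose proof (Hafter e He). destruct He as (HTe & _ & Hn). apply Hn. apply Hds; auto.
Qed.

Lemma delta_deriv_jump f t D :
  T t -> delta_deriv T f t D -> f (sigma T t) = f t + D * (sigma T t - t).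
Proof.
  intros Ht HD. pose proof (sigma_ge t) as Hsg.
  set (X := f (sigma T t) - f t - D * (sigma T t - t)).
  assert (Habs : Rabs X <= 0).
  { apply (le_of_le_plus_mult _ _ (sigma T t - t)); [lra|]. intros eps He.
    destruct (HD eps He) as [d [Hd Hs]]. specialize (Hs t Ht).
    rewrite Rminus_diag, Rabs_R0, (Rabs_right (sigma T t - t)) in Hs by lra.
    specialize (Hs Hd). fold X in Hs. lra. }
  apply Rabs_le_inv in Habs. unfold X in Habs. lra.
Qed.

Lemma delta_deriv_continuous f t D :
  T t -> delta_deriv T f t D ->
  forall eps, 0 < eps -> exists d, 0 < d /\
    forall s, T s -> Rabs (t - s) < d -> Rabs (f s - f t) <= eps.
Proof.
  intros Ht HD eps He.
  pose proof (delta_deriv_jump f t D Ht HD) as Hjump. pose proof (sigma_ge t).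
  set (mu := sigma T t - t). set (K := Rabs D + mu + 1).
  assert (HK : 0 < K) by (pose proof (Rabs_pos D); unfold K, mu; lra).
  set (q := eps / (2 * K)). assert (Hq : 0 < q) by (apply Rdiv_lt_0_compat; lra).
  assert (HqK : q * K = eps / 2) by (unfold q; field; lra).
  destruct (HD q Hq) as [d [Hd Hs]].
  exists (Rmin d (Rmin 1 q)). split; [repeat apply Rmin_glb_lt; lra|].
  intros s Hs' Hts.
  pose proof (Rmin_l d (Rmin 1 q)). pose proof (Rmin_r d (Rmin 1 q)).
  pose proof (Rmin_l 1 q). pose proof (Rmin_r 1 q).
  specialize (Hs s Hs' ltac:(lra)).
  set (err := f (sigma T t) - f s - D * (sigma T t - s)) in Hs.
  replace (f s - f t) with (D * (s - t) - err) by (unfold err; rewrite Hjump; ring).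
  assert (Hfar : Rabs (sigma T t - s) <= mu + 1).
  { replace (sigma T t - s) with (mu + (t - s)) by (unfold mu; ring).
    eapply Rle_trans; [apply Rabs_triang|]. rewrite (Rabs_right mu) by (unfold mu; lra). lra. }
  assert (Herr : Rabs err <= q * (mu + 1)).
  { eapply Rle_trans; [exact Hs|]. apply Rmult_le_compat_l; lra. }
  assert (Hlin : Rabs (D * (s - t)) <= Rabs D * q).
  { rewrite Rabs_mult, (Rabs_minus_sym s t). apply Rmult_le_compat_l; [apply Rabs_pos | lra]. }
  eapply Rle_trans; [apply Rabs_triang|]. rewrite Rabs_Ropp.
  assert (Rabs D * q + q * (mu + 1) = q * K) by (unfold K; ring). lra.
Qed.

Lemma left_limit_bound f t D b :
  T t -> delta_deriv T f t D ->
  (forall eps, 0 < eps -> exists s, T s /\ t - eps < s /\ s < t /\ f s <= b) -> f t <= b.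
Proof.
  intros Ht HD H. apply Rle_plus_epsilon. intros e He.
  destruct (delta_deriv_continuous f t D Ht HD e He) as [d [Hd Hs]].
  destruct (H d Hd) as (s & HTs & Hs1 & Hs2 & Hfs).
  specialize (Hs s HTs ltac:(rewrite Rabs_right; lra)). apply Rabs_le_inv in Hs. lra.
Qed.

Definition outgrows (B : R -> R) (t D : R) : Prop :=
  exists beta, D < beta /\ exists delta, 0 < delta /\
    forall s, T s -> t < s < t + delta -> B t + beta * (s - t) <= B s.

Lemma right_dense_bound f B t D :
  T t -> sigma T t = t -> delta_deriv T f t D ->
  (forall s, T s -> t <= s -> B t <= B s) -> f t <= B t ->
  (f t = B t -> outgrows B t D) ->
  exists d, 0 < d /\ forall s, T s -> t < s < t + d -> f s <= B s.
Proof.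
  intros Ht Hrd HD Hmono Hft Hcontact.
  destruct (Rle_lt_or_eq_dec _ _ Hft) as [Hstrict|Heq].
  - destruct (delta_deriv_continuous f t D Ht HD (B t - f t)) as [d [Hd Hs]]; [lra|].
    exists d. split; [exact Hd|]. intros s HTs Hts.
    specialize (Hs s HTs ltac:(rewrite Rabs_left1; lra)). apply Rabs_le_inv in Hs.
    pose proof (Hmono s HTs ltac:(lra)). lra.
  - destruct (Hcontact Heq) as (beta & Hbeta & delta & Hdelta & Hgrow).
    destruct (HD (beta - D)) as [d [Hd Hs]]; [lra|]. rewrite Hrd in Hs.
    exists (Rmin d delta). split; [apply Rmin_glb_lt; lra|]. intros s HTs Hts.
    pose proof (Rmin_l d delta). pose proof (Rmin_r d delta).
    specialize (Hs s HTs ltac:(rewrite Rabs_left1; lra)).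
    rewrite (Rabs_left1 (t - s)) in Hs by lra. apply Rabs_le_inv in Hs.
    pose proof (Hgrow s HTs ltac:(lra)). nra.
Qed.

Lemma common_radius (I : Type) (L : list I) (t : R) (Q : I -> R -> Prop) :
  (forall i, In i L -> exists d, 0 < d /\ forall s, t < s < t + d -> Q i s) ->
  exists d, 0 < d /\ forall i, In i L -> forall s, t < s < t + d -> Q i s.
Proof.
  induction L as [|i0 L IH]; intros H.
  - exists 1. split; [lra | intros i []].
  - destruct IH as [d1 [Hd1 H1]]; [intros i Hi; apply H; now right|].
    destruct (H i0 (or_introl eq_refl)) as [d0 [Hd0 H0]].
    exists (Rmin d0 d1). split; [apply Rmin_glb_lt; auto|].
    pose proof (Rmin_l d0 d1). pose proof (Rmin_r d0 d1).
    intros i [<-|Hi] s Hs; [apply H0 | apply (H1 i Hi)]; lra.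
Qed.

Lemma comparison_family (I : Type) (L : list I) (f B D : I -> R -> R) (t0 t1 : R) :
  T t0 ->
  (forall i t, T t -> t0 <= t -> delta_deriv T (f i) t (D i t)) ->
  (forall i s t, T s -> t0 <= s <= t -> B i s <= B i t) ->
  (forall i, f i t0 <= B i t0) ->
  (forall i t, ~ In i L -> T t -> t0 <= t <= t1 -> f i t <= B i t) ->
  (forall t, T t -> t0 <= t -> t < sigma T t -> (forall i, f i t <= B i t) ->
     forall i, f i t + (sigma T t - t) * D i t <= B i (sigma T t)) ->
  (forall t, T t -> t0 <= t -> sigma T t = t -> (forall i, f i t <= B i t) ->
     forall i, f i t = B i t -> outgrows (B i) t (D i t)) ->
  forall t, T t -> t0 <= t <= t1 -> forall i, f i t <= B i t.
Proof.
  intros Ht0 HD Hmono Hbase Hfree Hjump Hcontact t Ht [Ht0t Htt1].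
  revert Htt1. revert t Ht Ht0t.
  apply (ts_ind (fun t => t <= t1 -> forall i, f i t <= B i t) t0); auto.
  - intros t HTt Hle Hrs Hbound Hst1 i. pose proof (sigma_ge t).
    rewrite (delta_deriv_jump (f i) t (D i t) HTt (HD i t HTt Hle)), Rmult_comm.
    apply Hjump; auto. apply Hbound. lra.
  - intros t HTt Hle Hrd Hbound. destruct (Rlt_or_le t t1) as [Hlt|Hge].
    2:{ exists 1. split; [lra|]. intros s _ Hs _ Hst1. lra. }
    specialize (Hbound (Rlt_le _ _ Hlt)).
    destruct (common_radius I L t (fun i s => T s -> f i s <= B i s)) as [d [Hd Hall]].
    { intros i _.
      destruct (right_dense_bound (f i) (B i) t (D i t) HTt Hrd (HD i t HTt Hle))
        as [d [Hd Hs]]; [intros s HTs Hts; apply Hmono; auto; lra | apply Hbound |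
                         exact (Hcontact t HTt Hle Hrd Hbound i) |].
      exists d. split; auto. }
    exists d. split; [exact Hd|]. intros s HTs Hts1 Hts2 Hst1 i.
    destruct (classic (In i L)) as [Hin|Hout].
    + apply (Hall i Hin s); auto.
    + apply Hfree; auto; lra.
  - intros t HTt Hlt Hprev Hld Htt1 i.
    apply (left_limit_bound (f i) t (D i t)); auto; [apply HD; auto; lra|].
    intros eps He.
    destruct (Hld (Rmin eps (t - t0))) as (s & HTs & Hs1 & Hs2); [apply Rmin_glb_lt; lra|].
    pose proof (Rmin_l eps (t - t0)). pose proof (Rmin_r eps (t - t0)).
    exists s. repeat split; auto; try lra.
    eapply Rle_trans; [apply Hprev; auto; lra | apply Hmono; auto; lra].
Qed.

Lemma comparison (f B D : R -> R) (t0 : R) :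
  T t0 ->
  (forall t, T t -> t0 <= t -> delta_deriv T f t (D t)) ->
  (forall s t, T s -> t0 <= s <= t -> B s <= B t) ->
  f t0 <= B t0 ->
  (forall t, T t -> t0 <= t -> t < sigma T t -> f t <= B t ->
     f t + (sigma T t - t) * D t <= B (sigma T t)) ->
  (forall t, T t -> t0 <= t -> sigma T t = t -> f t = B t -> outgrows B t (D t)) ->
  forall t, T t -> t0 <= t -> f t <= B t.
Proof.
  intros Ht0 HD Hmono Hbase Hjump Hcontact t Ht Hle.
  refine (comparison_family unit (tt :: nil) (fun _ => f) (fun _ => B) (fun _ => D) t0 t
            Ht0 (fun _ => HD) (fun _ => Hmono) (fun _ => Hbase) _ _ _ t Ht _ tt).
  - intros [] s Hnot. exfalso. apply Hnot. now left.
  - intros s HTs Hs Hrs Hb []. exact (Hjump s HTs Hs Hrs (Hb tt)).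
  - intros s HTs Hs Hrd _ []. exact (Hcontact s HTs Hs Hrd).
  - lra.
Qed.

Section Relaxation.

Variables (c : R) (f g : R -> R).
Hypothesis Hc : 0 < c.
Hypothesis Hrate : forall t, T t -> c * (sigma T t - t) < 1.
Hypothesis Hf : forall t, T t -> delta_deriv T f t (- c * (f t - g t)).

(* f cannot stay above 2e forever when g <= e: then f + c e t decreases. *)
Lemma relaxation_enters_band e t0 :
  0 < e -> T t0 -> (forall t, T t -> t0 <= t -> g t <= e) ->
  exists t1, T t1 /\ t0 <= t1 /\ f t1 <= 2 * e.
Proof.
  intros He Ht0 Hg. apply NNPP. intro Hn.
  assert (Habove : forall t, T t -> t0 <= t -> 2 * e < f t).
  { intros t HTt Hle. apply Rnot_le_lt. intro. apply Hn. eauto. }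
  set (phi := fun x => f x + c * e * x).
  set (Dphi := fun x => - c * (f x - g x) + c * e * 1).
  assert (HDneg : forall t, T t -> t0 <= t -> Dphi t < 0).
  { intros t HTt Hle. specialize (Habove t HTt Hle). specialize (Hg t HTt Hle).
    unfold Dphi. nra. }
  assert (Hdecr : forall t, T t -> t0 <= t -> phi t <= phi t0).
  { apply (comparison phi (fun _ => phi t0) Dphi t0 Ht0).
    - intros t HTt _. apply delta_deriv_plus; [apply Hf; auto|].
      apply delta_deriv_scal, delta_deriv_id.
    - intros; lra.
    - lra.
    - intros t HTt Hle Hrs Hb. pose proof (HDneg t HTt Hle).
      assert (0 <= (sigma T t - t) * - Dphi t) by (apply Rmult_le_pos; lra). lra.
    - intros t HTt Hle _ _. exists 0. split; [exact (HDneg t HTt Hle)|].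
      exists 1. split; [lra|]. intros s _ _. lra. }
  set (X := Rabs (f t0) / (c * e)).
  assert (HX : c * e * X = Rabs (f t0)) by (unfold X; field; lra).
  destruct (ts_unbounded (t0 + X)) as [t [HTt Hlt]].
  assert (HX0 : 0 <= X).
  { unfold X, Rdiv. apply Rmult_le_pos; [apply Rabs_pos | apply Rlt_le, Rinv_0_lt_compat; nra]. }
  pose proof (Hdecr t HTt ltac:(lra)) as Hphi.
  pose proof (Habove t HTt ltac:(lra)).
  pose proof (Rle_abs (f t0)).
  assert (c * e * X < c * e * (t - t0)) by (apply Rmult_lt_compat_l; nra).
  unfold phi in Hphi. nra.
Qed.

(* Once below 2e, f stays below 2e while g <= e; this uses c mu < 1. *)
Lemma relaxation_stays_in_band e t1 :
  0 < e -> T t1 -> f t1 <= 2 * e -> (forall t, T t -> t1 <= t -> g t <= e) ->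
  forall t, T t -> t1 <= t -> f t <= 2 * e.
Proof.
  intros He Ht1 Hf1 Hg.
  apply (comparison f (fun _ => 2 * e) (fun t => - c * (f t - g t)) t1 Ht1);
    [intros t HTt _; apply Hf, HTt | intros; lra | exact Hf1 | |].
  - intros t HTt Hle Hrs Hb. pose proof (Hrate t HTt). pose proof (Hg t HTt Hle).
    set (m := sigma T t - t) in *.
    assert (0 <= (1 - c * m) * (2 * e - f t)) by (apply Rmult_le_pos; lra).
    assert (0 <= c * m * (e - g t)) by (apply Rmult_le_pos; [unfold m; nra | lra]).
    assert (0 <= c * m * e) by (apply Rmult_le_pos; [unfold m; nra | lra]).
    nra.
  - intros t HTt Hle _ Heq. exists 0. split; [pose proof (Hg t HTt Hle); nra|].
    exists 1. split; [lra|]. intros s _ _. lra.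
Qed.

Lemma relaxation_eventually_below e t0 :
  0 < e -> T t0 -> (forall t, T t -> t0 <= t -> g t <= e) ->
  exists t1, forall b, T b -> t1 < b -> f b <= 2 * e.
Proof.
  intros He Ht0 Hg.
  destruct (relaxation_enters_band e t0 He Ht0 Hg) as (t1 & Ht1 & Hle & Hf1).
  exists t1. intros b Hb Hlt.
  apply (relaxation_stays_in_band e t1); auto; try lra.
  intros t HTt Hle'. apply Hg; auto; lra.
Qed.

End Relaxation.

Lemma relaxation_tends_to_zero c f g :
  0 < c -> (forall t, T t -> c * (sigma T t - t) < 1) ->
  (forall t, T t -> delta_deriv T f t (- c * (f t - g t))) ->
  tends_to_zero T g -> tends_to_zero T f.
Proof.
  intros Hc Hrate Hf Hg eps He.
  destruct (Hg (eps / 3)) as [M HM]; [lra|].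
  destruct (ts_unbounded M) as [t0 [Ht0 HMt]].
  assert (Hsmall : forall t, T t -> t0 <= t -> - (eps / 3) <= g t <= eps / 3).
  { intros t HTt Hle. apply Rabs_le_inv, Rlt_le, HM; auto; lra. }
  destruct (relaxation_eventually_below c f g Hc Hrate Hf (eps / 3) t0) as [t1 Ht1];
    auto; [lra | intros t HTt Hle; apply Hsmall; auto |].
  destruct (relaxation_eventually_below c (fun x => -1 * f x) (fun x => -1 * g x) Hc Hrate)
    with (e := eps / 3) (t0 := t0) as [t2 Ht2]; auto; try lra.
  - intros t HTt. eapply delta_deriv_ext; [| |apply delta_deriv_scal, Hf, HTt];
      [reflexivity | ring].
  - intros t HTt Hle. pose proof (Hsmall t HTt Hle). lra.
  - exists (Rmax t1 t2). intros b Hb Hlt.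
    pose proof (Rmax_l t1 t2). pose proof (Rmax_r t1 t2).
    specialize (Ht1 b Hb ltac:(lra)). specialize (Ht2 b Hb ltac:(lra)).
    apply Rabs_def1; lra.
Qed.

(* Uniqueness: a family with v_j^Delta = - c (v_j - v_(j+1)), zero initial
   data and uniformly bounded on bounded time intervals is nonpositive; indeed
   v_j(t) <= eps 2^j e^(2ct) for every eps > 0, by comparison. *)
Lemma bounded_family_nonpos c (v : nat -> R -> R) :
  0 < c -> (forall t, T t -> c * (sigma T t - t) < 1) ->
  (forall j t, T t -> delta_deriv T (v j) t (- c * (v j t - v (S j) t))) ->
  (forall j, v j 0 = 0) ->
  (forall T0, 0 < T0 -> exists M, forall j t, T t -> t <= T0 -> Rabs (v j t) <= M) ->
  forall j t, T t -> v j t <= 0.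
Proof.
  intros Hc Hrate Hv H0 Hbd j t HTt. pose proof (ts_nonneg t HTt) as Ht.
  apply (le_of_le_plus_mult _ _ (weight 1 c j t)).
  { apply Rlt_le, weight_pos; lra. }
  intros eps He. replace (0 + eps * weight 1 c j t) with (weight eps c j t)
    by (unfold weight; ring).
  pose proof (weight_pos eps c He) as HBpos.
  pose proof (weight_succ eps c) as HBS.
  pose proof (weight_tangent eps c He (Rlt_le _ _ Hc)) as HBgrow.
  destruct (Hbd (t + 1)) as [M HM]; [lra|].
  destruct (Pow_x_infinity 2 ltac:(rewrite Rabs_right; lra) (M / eps)) as [N HN].
  apply (comparison_family nat (seq 0 N) v (weight eps c) (fun i s => - c * (v i s - v (S i) s)) 0 t
           ts_zero); auto; try lra.
  - intros i s s' HTs Hss. pose proof (HBgrow i s s' ltac:(lra)).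
    pose proof (HBpos i s). assert (0 <= 2 * c * (s' - s)) by nra. nra.
  - intros i. rewrite H0. apply Rlt_le, HBpos.
  - intros i s Hout HTs Hs. rewrite in_seq in Hout.
    assert (Hi : (N <= i)%nat) by lia. specialize (HN i Hi).
    rewrite Rabs_right in HN by (apply Rle_ge, pow_le; lra).
    pose proof (exp_monotone 0 (2 * c * s) ltac:(nra)). rewrite exp_0 in *.
    pose proof (Rabs_le_inv _ _ (HM i s HTs ltac:(lra))).
    assert (eps * (M / eps) = M) by (field; lra).
    assert (eps * (M / eps) <= eps * 2 ^ i) by (apply Rmult_le_compat_l; lra).
    unfold weight. assert (0 < 2 ^ i) by (apply pow_lt; lra). nra.
  - intros s HTs Hs Hrs Hb i. pose proof (Hrate s HTs). pose proof (Hb i). pose proof (Hb (S i)).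
    rewrite HBS in *. pose proof (HBgrow i s (sigma T s) (sigma_ge s)).
    set (m := sigma T s - s) in *.
    assert (0 <= (1 - c * m) * (weight eps c i s - v i s)) by (apply Rmult_le_pos; lra).
    assert (Hcm : 0 <= c * m) by (unfold m; nra).
    assert (0 <= c * m * (2 * weight eps c i s - v (S i) s)) by (apply Rmult_le_pos; lra).
    assert (0 <= c * m * weight eps c i s) by (pose proof (HBpos i s); apply Rmult_le_pos; lra).
    nra.
  - intros s HTs Hs _ Hb i Heq. pose proof (Hb (S i)). rewrite HBS in *. pose proof (HBpos i s).
    exists (2 * c * weight eps c i s). split; [nra|].
    exists 1. split; [lra|]. intros s' _ Hss. pose proof (HBgrow i s s' ltac:(lra)). nra.
Qed.

Lemma bounded_family_zero c (v : nat -> R -> R) :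
  0 < c -> (forall t, T t -> c * (sigma T t - t) < 1) ->
  (forall j t, T t -> delta_deriv T (v j) t (- c * (v j t - v (S j) t))) ->
  (forall j, v j 0 = 0) ->
  (forall T0, 0 < T0 -> exists M, forall j t, T t -> t <= T0 -> Rabs (v j t) <= M) ->
  forall j t, T t -> v j t = 0.
Proof.
  intros Hc Hrate Hv H0 Hbd j t HTt. apply Rle_antisym.
  - exact (bounded_family_nonpos c v Hc Hrate Hv H0 Hbd j t HTt).
  - assert (-1 * v j t <= 0); [|lra].
    apply (bounded_family_nonpos c (fun j t => -1 * v j t)); auto.
    + intros i s HTs. eapply delta_deriv_ext; [| |apply delta_deriv_scal, Hv, HTs];
        [reflexivity | ring].
    + intros i. rewrite H0. ring.
    + intros T0 HT0. destruct (Hbd T0 HT0) as [M HM]. exists M. intros i s HTs Hs.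
      replace (-1 * v i s) with (- v i s) by ring. rewrite Rabs_Ropp. auto.
Qed.

Lemma delta_integral_of_antiderivative (f F : R -> R) (l : R) :
  (forall t, T t -> delta_deriv T F t (f t)) -> tends_to_zero T (fun b => F b - l) ->
  delta_integral_0_infty T f (l - F 0).
Proof.
  intros HF Hlim. exists F. split; [exact HF|]. intros eps He.
  destruct (Hlim eps He) as [M HM]. exists M. intros b Hb Hlt.
  replace (F b - F 0 - (l - F 0)) with (F b - l) by ring. auto.
Qed.

End TimeScale.

Section ProblemP.

Variables (T : R -> Prop) (A k mux : R) (u : R -> R -> R).
Hypothesis HT : is_time_scale T.
Hypothesis Hk : 0 < k.
Hypothesis Hmux : 0 < mux.
Hypothesis HTS1 : TS1 T k mux.
Hypothesis Hsol : is_solution_P T A k mux u.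

Definition column (z : Z) : R -> R := u (IZR z * mux).

Lemma rate_small t : T t -> k / mux * (sigma T t - t) < 1.
Proof.
  intros HTt. specialize (HTS1 t HTt). unfold graininess in HTS1.
  replace (k / mux * (sigma T t - t)) with (k * (sigma T t - t) / mux) by (field; lra). lra.
Qed.

Lemma rate_pos : 0 < k / mux.
Proof. apply Rdiv_lt_0_compat; assumption. Qed.

Lemma column_equation z t :
  T t -> delta_deriv T (column z) t (- (k / mux) * (column z t - column (z - 1) t)).
Proof.
  intros HTt. destruct Hsol as [Heq _].
  eapply delta_deriv_ext; [| |apply (Heq (IZR z * mux) t (ex_intro _ z eq_refl) HTt)];
    [reflexivity|].
  unfold column. rewrite minus_IZR.
  replace ((IZR z - 1) * mux) with (IZR z * mux - mux) by ring. field. lra.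
Qed.

Lemma column_initial z : z <> 0%Z -> column z 0 = 0.
Proof.
  intros Hz. destruct Hsol as (_ & _ & Hinit & _). apply Hinit; [now exists z|].
  apply Rmult_integral_contrapositive_currified; [now apply not_0_IZR | lra].
Qed.

(* The columns to the left of the initial mass stay zero, by uniqueness. *)
Lemma negative_columns_vanish j t : T t -> column (- Z.of_nat j - 1) t = 0.
Proof.
  apply (bounded_family_zero T HT (k / mux) (fun j => column (- Z.of_nat j - 1)) rate_pos
           rate_small).
  - intros i s HTs. replace (- Z.of_nat (S i) - 1)%Z with (- Z.of_nat i - 1 - 1)%Z by lia.
    apply column_equation, HTs.
  - intros i. apply column_initial. lia.
  - intros T0 HT0. destruct Hsol as (_ & _ & _ & Hbd). destruct (Hbd T0 HT0) as [M HM].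
    exists M. intros i s HTs Hs. apply HM; auto. now exists (- Z.of_nat i - 1)%Z.
Qed.

(* Each column relaxes toward its left neighbour, so all columns decay. *)
Lemma columns_tend_to_zero n : tends_to_zero T (column (Z.of_nat n)).
Proof.
  induction n as [|n IH].
  - apply (relaxation_tends_to_zero T HT (k / mux) _ (column (-1)) rate_pos rate_small).
    + intros t HTt. apply (column_equation 0 t HTt).
    + intros eps He. exists 0. intros b Hb _.
      rewrite (negative_columns_vanish 0 b Hb : column (-1) b = 0), Rabs_R0. exact He.
  - apply (relaxation_tends_to_zero T HT (k / mux) _ (column (Z.of_nat n)) rate_pos rate_small);
      [|exact IH].
    intros t HTt. replace (Z.of_nat n) with (Z.of_nat (S n) - 1)%Z by lia.
    apply column_equation, HTt.
Qed.

Definition mass (n : nat) (t : R) : R := sum_f_R0 (fun j => column (Z.of_nat j) t) n.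

Lemma mass_initial n : mass n 0 = A.
Proof.
  induction n as [|n IH]; unfold mass in *; simpl.
  - unfold column. rewrite Rmult_0_l. apply Hsol.
  - rewrite IH, column_initial by lia. ring.
Qed.

(* The inflow telescopes: only the outflow of the last column remains. *)
Lemma mass_equation n t :
  T t -> delta_deriv T (mass n) t (- (k / mux) * column (Z.of_nat n) t).
Proof.
  intros HTt. induction n as [|n IH].
  - eapply delta_deriv_ext; [| |apply (column_equation 0 t HTt)]; [reflexivity|].
    rewrite (negative_columns_vanish 0 t HTt : column (0 - 1) t = 0).
    change (Z.of_nat 0) with 0%Z. ring.
  - eapply delta_deriv_ext; [| |apply delta_deriv_plus; [apply IH | apply column_equation, HTt]];
      [reflexivity|].
    replace (Z.of_nat (S n) - 1)%Z with (Z.of_nat n) by lia. ring.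
Qed.

(* - S_n / c is an antiderivative of u_n that tends to 0, so the integral
   of u_n equals S_n(0) / c = A mux / k. *)
Lemma column_integral n : delta_integral_0_infty T (column (Z.of_nat n)) (A * mux / k).
Proof.
  set (F := fun t => - / (k / mux) * mass n t).
  replace (A * mux / k) with (0 - F 0) by (unfold F; rewrite mass_initial; field; lra).
  apply delta_integral_of_antiderivative.
  - intros t HTt. eapply delta_deriv_ext; [| |apply delta_deriv_scal, mass_equation, HTt];
      [reflexivity | field; lra].
  - intros eps He.
    destruct (tends_to_zero_sum T _ columns_tend_to_zero n (eps * (k / mux))) as [M HM].
    { apply Rmult_lt_0_compat; [lra | exact rate_pos]. }
    exists M. intros b Hb Hlt. specialize (HM b Hb Hlt).
    unfold F. rewrite Rminus_0_r, Rabs_mult, Rabs_Ropp, Rabs_inv, (Rabs_right (k / mux))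
      by (apply Rle_ge, Rlt_le, rate_pos).
    pose proof rate_pos.
    apply (Rmult_lt_reg_l (k / mux)); [lra|].
    replace (k / mux * (/ (k / mux) * Rabs (mass n b))) with (Rabs (mass n b)) by (field; lra).
    unfold mass. lra.
Qed.

End ProblemP.

Theorem mainTheorem10 (T : R -> Prop) (A k mux : R) (u : R -> R -> R) :
  is_time_scale T -> 0 < A -> 0 < k -> 0 < mux ->
  TS1 T k mux ->
  is_solution_P T A k mux u ->
  forall n : nat,
    delta_integral_0_infty T (u (INR n * mux)) (A * mux / k) /\
    delta_integral_0_infty T (u 0) (A * mux / k).
Proof.
  intros HT _ Hk Hmux HTS1 Hsol n. split.
  - rewrite INR_IZR_INZ. exact (column_integral T A k mux u HT Hk Hmux HTS1 Hsol n).
  - pose proof (column_integral T A k mux u HT Hk Hmux HTS1 Hsol 0) as H0.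
    unfold column in H0. rewrite Rmult_0_l in H0. exact H0.
Qed.
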